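(* Let $H\subseteq F^7$ be the binary Hamming code of length 7 spanned by the vectors with supports $\{1,2,3\},\{1,4,5\},\{1,6,7\},\{2,4,6\}$. Let $\lambda_1:H\to\{0,1\}$ take the value $0$ exactly on $0^7$, $\{1,6,7\}$, $\{1,3,5,7\}$, $1^7$ (codewords given by supports) and $1$ on the other codewords, and let $\lambda_2:H\to\{0,1\}$ take the value $0$ exactly on $0^7$, $\{1,6,7\}$, $\{2,4,6\}$, $\{4,5,6,7\}$ and $1$ on the other codewords. Then the perfect codes $V22^1=V_H^{\lambda_1}$ and $V3^11=V_H^{\lambda_2}$ of length 15 are not transitive, where $V_H^\lambda=\{(x+y,\ |x|+\lambda(y),\ x)\mid x\in F^7,\ y\in H\}$.
   Context: $|x|=x_1+\dots+x_7\pmod 2$. The automorphism group of a code $C\subseteq F^m$ is $\mathrm{Aut}(C)=\{(y,\pi)\mid y\in F^m,\ \pi\in S_m,\ y+\pi(C)=C\}$, where permutations act by permuting coordinates. A code $C$ is transitive if $\mathrm{Aut}(C)$ has a subgroup acting transitively on the codewords of $C$; equivalently, for every $y\in C$ there is $\pi\in S_m$ with $y+\pi(C)=C$. *)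

From HB Require Import structures.
From mathcomp Require Import all_boot all_order all_algebra all_fingroup.
Set Implicit Arguments. Unset Strict Implicit. Unset Printing Implicit Defensive.
Import GRing.Theory.
Local Open Scope ring_scope.

(* the 0/1 vector of length n whose support is s (coordinates numbered 1..n) *)
Definition supp_vec (n : nat) (s : seq nat) : 'rV['F_2]_n :=
  \row_(i < n) (if i.+1 \in s then 1 else 0).

Definition wt2 (n : nat) (x : 'rV['F_2]_n) : 'F_2 := \sum_(i < n) x 0 i.

Definition genH : 'M['F_2]_(4, 7) :=
  col_mx (col_mx (supp_vec 7 [:: 1; 2; 3]) (supp_vec 7 [:: 1; 4; 5]))
         (col_mx (supp_vec 7 [:: 1; 6; 7]) (supp_vec 7 [:: 2; 4; 6])).

Definition Ham : {set 'rV['F_2]_7} := [set v : 'rV['F_2]_7 | (v <= genH)%MS].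

(* lambda_1 and lambda_2 (only their values on H are relevant) *)
Definition lam1 (y : 'rV['F_2]_7) : 'F_2 :=
  if y \in [:: supp_vec 7 [::]; supp_vec 7 [:: 1; 6; 7];
              supp_vec 7 [:: 1; 3; 5; 7]; supp_vec 7 [:: 1; 2; 3; 4; 5; 6; 7]]
  then 0 else 1.

Definition lam2 (y : 'rV['F_2]_7) : 'F_2 :=
  if y \in [:: supp_vec 7 [::]; supp_vec 7 [:: 1; 6; 7];
              supp_vec 7 [:: 2; 4; 6]; supp_vec 7 [:: 4; 5; 6; 7]]
  then 0 else 1.

Definition VHl (lam : 'rV['F_2]_7 -> 'F_2) : {set 'rV['F_2]_(7 + 1 + 7)} :=
  [set row_mx (row_mx (x + y) (\row_(_ < 1) (wt2 x + lam y))) x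
     | x : 'rV['F_2]_7, y : 'rV['F_2]_7 in Ham].

Definition perm_code (n : nat) (s : 'S_n) (C : {set 'rV['F_2]_n}) :
  {set 'rV['F_2]_n} := [set col_perm s c | c in C].

Definition transl (n : nat) (y : 'rV['F_2]_n) (C : {set 'rV['F_2]_n}) :
  {set 'rV['F_2]_n} := [set y + c | c in C].

Definition transitive_code (n : nat) (C : {set 'rV['F_2]_n}) : Prop :=
  forall y, y \in C -> exists s : 'S_n, transl y (perm_code s C) = C.

From mathcomp Require Import all_boot all_order all_algebra all_fingroup.
From Stdlib Require Import PeanoNat Lia.
Import GRing.Theory.
Local Open Scope ring_scope.

(* If y + pi(C) = C, then d |-> y + pi d permutes C and maps c + d to pi c + (y + pi d),
   so the pair count N(z) = #{d in C | z + d in C} satisfies N(pi c) = N(c); as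
   pi c = (y + pi c) + y, every value N(c), c in C, is attained on C + y.
   For C = V_H^lambda the pair count of (x, a) + (x', b) is 2^7 times the number of
   h in H with lambda(a) + lambda(h) + lambda(b) = lambda(a + h + b), so the question
   becomes a count over the 16 codewords of H, which we evaluate on 7-bit masks:
   for y the word of the codeword {1,2,3} and a suitable c, no word of C + y has the
   pair count of c. *)

Lemma addrr_F2 n (z : 'rV['F_2]_n) : z + z = 0.
Proof.
by apply/rowP => i; rewrite !mxE (addrr_pchar2 (pchar_Fp (isT : prime 2))).
Qed.

Section PairCount.
Context {n : nat}.
Implicit Types (C : {set 'rV['F_2]_n}) (y z : 'rV['F_2]_n).

Definition pair_count C z := #|[set d in C | z + d \in C]|.

Lemma pair_count_col_perm {C y} {s : 'S_n} z :
  transl y (perm_code s C) = C -> pair_count C (col_perm s z) = pair_count C z.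
Proof.
move=> yC; pose f d := y + col_perm s d.
have f_inj : injective f.
  by move=> d e /addrI /(congr1 (col_perm s^-1)); rewrite -!col_permM mulVg !col_perm1.
have memf x : (f x \in C) = (x \in C).
  by rewrite -{1}yC /transl /perm_code -imset_comp mem_imset.
rewrite /pair_count -(card_preimset _ f_inj); apply: eq_card => d.
have fD : col_perm s z + f d = f (z + d) by rewrite /f raddfD addrCA.
by rewrite !inE fD !memf.
Qed.

Lemma not_transitive_code_pair_count {C y c} :
  y \in C -> c \in C ->
  (forall d, d \in C -> pair_count C (d + y) != pair_count C c) ->
  ~ transitive_code C.
Proof.
move=> yC cC neq_count /(_ y yC) [s sC].
have dC : y + col_perm s c \in C by rewrite -sC; apply/imset_f/imset_f.
by have := neq_count _ dC; rewrite addrAC addrr_F2 add0r (pair_count_col_perm c sC) eqxx.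
Qed.

End PairCount.

Lemma wt2D n (x y : 'rV['F_2]_n) : wt2 (x + y) = wt2 x + wt2 y.
Proof. by rewrite /wt2 -big_split; apply: eq_bigr => i _; rewrite mxE. Qed.

Lemma wt20 n : wt2 (0 : 'rV['F_2]_n) = 0.
Proof. by rewrite /wt2 big1 // => i _; rewrite mxE. Qed.

Lemma Ham0 : 0 \in Ham.
Proof. by rewrite inE sub0mx. Qed.

Lemma HamD h1 h2 : h1 \in Ham -> h2 \in Ham -> h1 + h2 \in Ham.
Proof. by rewrite !inE; apply: addmx_sub. Qed.

Lemma addrACA3 (V : nmodType) (a b c d e f : V) :
  a + b + (c + d) + (e + f) = a + c + e + (b + d + f).
Proof. by rewrite (addrACA a b c d) (addrACA (a + c) (b + d) e f). Qed.

Section VHl.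
Variable lam : 'rV['F_2]_7 -> 'F_2.

Definition vhl_row (x h : 'rV['F_2]_7) (l : 'F_2) : 'rV['F_2]_(7 + 1 + 7) :=
  row_mx (row_mx (x + h) (\row_(_ < 1) (wt2 x + l))) x.

Definition vhl_word x h := vhl_row x h (lam h).

Lemma vhl_word_in x {h} : h \in Ham -> vhl_word x h \in VHl lam.
Proof. by move=> hH; apply/imset2P; exists x h. Qed.

Lemma VHlP v : v \in VHl lam -> exists x h, h \in Ham /\ v = vhl_word x h.
Proof. by case/imset2P => x h _ hH ->; exists x, h. Qed.

Lemma vhl_row_inj x1 h1 l1 x2 h2 l2 :
  vhl_row x1 h1 l1 = vhl_row x2 h2 l2 -> [/\ x1 = x2, h1 = h2 & l1 = l2].
Proof.
case/eq_row_mx => /eq_row_mx [eq_xh /rowP/(_ 0) eq_l] eq_x.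
by move: eq_xh eq_l; rewrite !mxE -{}eq_x => /addrI -> /addrI ->.
Qed.

Lemma mem_VHl_row x h l : h \in Ham -> (vhl_row x h l \in VHl lam) = (l == lam h).
Proof.
move=> hH; apply/idP/eqP => [|->]; last exact: vhl_word_in.
by case/VHlP => x' [h' [_ /vhl_row_inj [_ -> ->]]].
Qed.

Lemma vhl_word_add3 x1 h1 x2 h2 x3 h3 :
  vhl_word x1 h1 + vhl_word x2 h2 + vhl_word x3 h3 =
  vhl_row (x1 + x2 + x3) (h1 + h2 + h3) (lam h1 + lam h2 + lam h3).
Proof.
rewrite /vhl_word /vhl_row !add_row_mx; congr (row_mx (row_mx _ _) _).
  exact: addrACA3.
by apply/rowP => i; rewrite !mxE !wt2D; apply: addrACA3.
Qed.

Definition lam_sum3 a b := [set h in Ham | lam a + lam h + lam b == lam (a + h + b)].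

Lemma pair_count_VHl x1 a x2 b : a \in Ham -> b \in Ham ->
  pair_count (VHl lam) (vhl_word x1 a + vhl_word x2 b) =
  (#|{: 'rV['F_2]_7}| * #|lam_sum3 a b|)%N.
Proof.
move=> aH bH; rewrite /pair_count -cardsT -cardsX -(card_imset _ (f := uncurry vhl_word)).
  apply: eq_card => d; rewrite inE; apply/andP/imsetP => [[/VHlP [x [h [hH ->]]]]|].
    rewrite addrAC vhl_word_add3 mem_VHl_row ?HamD // => sum3.
    by exists (x, h); rewrite // in_setX in_setT in_set hH.
  case=> [[x h]]; rewrite in_setX in_setT in_set /= => /andP [hH sum3] ->.
  by rewrite vhl_word_in // addrAC vhl_word_add3 mem_VHl_row ?HamD.
by move=> [x h] [x' h'] /vhl_row_inj [/= -> -> _].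
Qed.

Lemma not_transitive_VHl a b : lam 0 = 0 -> a \in Ham -> b \in Ham ->
  (forall h, h \in Ham -> #|lam_sum3 h b| != #|lam_sum3 a 0|) ->
  ~ transitive_code (VHl lam).
Proof.
move=> lam0 aH bH neq_card.
apply: (not_transitive_code_pair_count (vhl_word_in 0 bH) (vhl_word_in 0 aH)).
have word00 : vhl_word 0 0 = 0.
  have row0 : \row_(_ < 1) (0 : 'F_2) = 0 by apply/rowP => i; rewrite !mxE.
  by rewrite /vhl_word /vhl_row lam0 wt20 !addr0 row0 !row_mx0.
move=> d /VHlP [x [h [hH ->]]].
rewrite -[vhl_word 0 a]addr0 -word00 !pair_count_VHl ?Ham0 //.
by rewrite eqn_pmul2l ?neq_card // -cardsT card_gt0; apply/set0Pn; exists 0; rewrite inE.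
Qed.

End VHl.

Lemma F2_natrD (a b : bool) : (a%:R + b%:R : 'F_2) = (a (+) b)%:R.
Proof. by case: a; case: b; apply/val_inj. Qed.

Lemma F2_natr_eq (a b : bool) : ((a%:R : 'F_2) == b%:R) = (a == b).
Proof. by case: a; case: b. Qed.

Lemma F2_natr_neq0 (x : 'F_2) : (x != 0)%:R = x.
Proof. by case: x => [[|[|?]] ?]; apply/val_inj. Qed.

Definition bitvec (m : nat) : 'rV['F_2]_7 := \row_(i < 7) (Nat.testbit m i)%:R.

Lemma bitvec0 : bitvec 0 = 0.
Proof. by apply/rowP => i; rewrite !mxE Nat.bits_0. Qed.

Lemma bitvec_lxor m1 m2 : bitvec (Nat.lxor m1 m2) = bitvec m1 + bitvec m2.
Proof.
by apply/rowP => i; rewrite !mxE F2_natrD Nat.lxor_spec; case: Nat.testbit; case: Nat.testbit.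
Qed.

Lemma testbit_small m i : (m < 128)%N -> (7 <= i)%N -> Nat.testbit m i = false.
Proof.
move=> /ltP lt_m /leP le_i; apply/Nat.testbit_false.
have : (128 <= 2 ^ i)%coq_nat by apply: (Nat.pow_le_mono_r 2 7 i).
by move=> ?; rewrite Nat.div_small ?Nat.Div0.mod_0_l //; lia.
Qed.

Lemma bitvec_inj : {in gtn 128 &, injective bitvec}.
Proof.
move=> m1 m2 lt1 lt2 eq12; apply: Nat.bits_inj => i.
have [lt_i|le_i] := ltnP i 7; last by rewrite !testbit_small.
by apply/eqP; rewrite -F2_natr_eq; have /rowP/(_ (Ordinal lt_i)) := eq12; rewrite !mxE => ->.
Qed.

Lemma supp_vec_bitvec s m :
  all (fun i => (i.+1 \in s) == Nat.testbit m i) (iota 0 7) -> supp_vec 7 s = bitvec m.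
Proof.
move/allP=> bits; apply/rowP => i; rewrite !mxE.
by rewrite (eqP (bits i _)) ?mem_iota ?ltn_ord //; case: Nat.testbit.
Qed.

Definition xor_if (b : bool) (g m : nat) : nat := if b then Nat.lxor g m else m.

Fixpoint xor_span (gs : seq nat) : seq nat :=
  if gs is g :: gs' then [seq xor_if b g m | b <- [:: false; true], m <- xor_span gs']
  else [:: 0%N].

Lemma mem_xor_span_cons b g gs m :
  m \in xor_span gs -> xor_if b g m \in xor_span (g :: gs).
Proof. by move=> mS; apply/allpairsP; exists (b, m); case: b. Qed.

Lemma lxor_xor_if b1 b2 g m1 m2 :
  Nat.lxor (xor_if b1 g m1) (xor_if b2 g m2) = xor_if (b1 (+) b2) g (Nat.lxor m1 m2).
Proof.
apply: Nat.bits_inj => i; case: b1; case: b2; rewrite /= !Nat.lxor_spec;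
  by case: (Nat.testbit g i); case: (Nat.testbit m1 i); case: (Nat.testbit m2 i).
Qed.

Lemma lxor_xor_span gs :
  {in xor_span gs &, forall m1 m2, Nat.lxor m1 m2 \in xor_span gs}.
Proof.
elim: gs => [|g gs IH] m1 m2; first by rewrite !inE => /eqP-> /eqP->.
case/allpairsP=> [[b1 x1] [_ x1S ->]] /allpairsP [[b2 x2] [_ x2S ->]].
by rewrite lxor_xor_if mem_xor_span_cons ?IH.
Qed.

(* The generators of H as bit masks: 7 = {1,2,3}, 25 = {1,4,5}, 97 = {1,6,7}, 42 = {2,4,6}. *)
Definition Hcodes : seq nat := xor_span [:: 7; 25; 97; 42].

Lemma Hcodes_small : all (gtn 128) Hcodes.
Proof. by vm_compute. Qed.

Lemma Hcodes_uniq : uniq Hcodes.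
Proof. by vm_compute. Qed.

Lemma bitvec_xor_if (b : bool) g m : b%:R *: bitvec g + bitvec m = bitvec (xor_if b g m).
Proof. by case: b; rewrite ?scale1r ?scale0r ?add0r // bitvec_lxor. Qed.

Lemma genH_mulmx (b0 b1 b2 b3 : bool) :
  (row_mx (row_mx b0%:R%:M b1%:R%:M) (row_mx b2%:R%:M b3%:R%:M)
     : 'rV['F_2]_(1 + 1 + (1 + 1))) *m genH =
  bitvec (xor_if b0 7 (xor_if b1 25 (xor_if b2 97 (xor_if b3 42 0)))).
Proof.
rewrite /genH !mul_row_col !mul_scalar_mx -addrA -[b3%:R *: _]addr0 -bitvec0.
rewrite (@supp_vec_bitvec _ 7) // (@supp_vec_bitvec _ 25) //.
rewrite (@supp_vec_bitvec _ 97) // (@supp_vec_bitvec _ 42) //.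
by rewrite !bitvec_xor_if.
Qed.

Lemma mx11_F2 (u : 'M['F_2]_1) : exists b : bool, u = b%:R%:M.
Proof. by exists (u 0 0 != 0); rewrite F2_natr_neq0 -mx11_scalar. Qed.

Lemma HamP h : h \in Ham -> exists2 m, m \in Hcodes & h = bitvec m.
Proof.
rewrite inE => /submxP [k ->].
pose k' : 'rV['F_2]_(1 + 1 + (1 + 1)) := k.
rewrite -[k]/k' -(hsubmxK k') -(hsubmxK (lsubmx k')) -(hsubmxK (rsubmx k')).
have [b0 ->] := mx11_F2 (lsubmx (lsubmx k')).
have [b1 ->] := mx11_F2 (rsubmx (lsubmx k')).
have [b2 ->] := mx11_F2 (lsubmx (rsubmx k')).
have [b3 ->] := mx11_F2 (rsubmx (rsubmx k')).
by rewrite genH_mulmx; eexists; last reflexivity; rewrite !mem_xor_span_cons.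
Qed.

Lemma bitvec_Hcodes m : m \in Hcodes -> bitvec m \in Ham.
Proof.
case/allpairsP=> [[b0 m0] [_ + ->]]; case/allpairsP=> [[b1 m1] [_ + ->]].
case/allpairsP=> [[b2 m2] [_ + ->]]; case/allpairsP=> [[b3 m3] [_ + ->]].
by rewrite inE => /eqP ->; rewrite -genH_mulmx inE submxMl.
Qed.

Lemma mem_map_bitvec L m : (m < 128)%N -> all (gtn 128) L ->
  (bitvec m \in map bitvec L) = (m \in L).
Proof.
move=> lt_m /allP lt_L; apply/mapP/idP => [[m' m'L /bitvec_inj eq_m]|]; last by exists m.
by rewrite eq_m ?inE //; apply: lt_L.
Qed.

Section XorCount.
Variables (lam : 'rV['F_2]_7 -> 'F_2) (L : seq nat).
Hypothesis lamE : {in Hcodes, forall m, lam (bitvec m) = (m \notin L)%:R}.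

Definition xor_sum3 a b m :=
  (a \notin L) (+) (m \notin L) (+) (b \notin L) == (Nat.lxor (Nat.lxor a m) b \notin L).

Definition xor_count a b := count (xor_sum3 a b) Hcodes.

Lemma lam_sum3_bitvec a m b : a \in Hcodes -> m \in Hcodes -> b \in Hcodes ->
  (lam (bitvec a) + lam (bitvec m) + lam (bitvec b) ==
   lam (bitvec a + bitvec m + bitvec b)) = xor_sum3 a b m.
Proof.
move=> aH mH bH.
by rewrite -!bitvec_lxor !lamE ?lxor_xor_span // !F2_natrD F2_natr_eq.
Qed.

Lemma card_lam_sum3 a b : a \in Hcodes -> b \in Hcodes ->
  #|lam_sum3 lam (bitvec a) (bitvec b)| = xor_count a b.
Proof.
move=> aH bH.
have sum3E : lam_sum3 lam (bitvec a) (bitvec b) =i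
             [seq bitvec m | m <- Hcodes & xor_sum3 a b m].
  move=> h; rewrite in_set; apply/andP/mapP => [[/HamP [m mH ->]]|[m]].
    by rewrite lam_sum3_bitvec // => sum3; exists m; rewrite // mem_filter sum3.
  by rewrite mem_filter => /andP [sum3 mH] ->; rewrite bitvec_Hcodes ?lam_sum3_bitvec.
rewrite (eq_card sum3E) (card_uniqP _) ?size_map ?size_filter //.
rewrite map_inj_in_uniq ?filter_uniq ?Hcodes_uniq // => m1 m2.
rewrite !mem_filter => /andP [_ m1H] /andP [_ m2H].
by apply: bitvec_inj; apply: (allP Hcodes_small).
Qed.

Lemma not_transitive_VHl_xor_count a b : a \in Hcodes -> b \in Hcodes -> 0%N \in L ->
  all (fun m => xor_count m b != xor_count a 0) Hcodes ->
  ~ transitive_code (VHl lam).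
Proof.
move=> aH bH L0 /allP counts.
have H0 : 0%N \in Hcodes by vm_compute.
apply: (@not_transitive_VHl lam (bitvec a) (bitvec b)); rewrite ?bitvec_Hcodes //.
  by rewrite -bitvec0 lamE // L0.
by move=> h /HamP [m mH ->]; rewrite -bitvec0 !card_lam_sum3 // counts.
Qed.

End XorCount.

Lemma lam1E : {in Hcodes, forall m, lam1 (bitvec m) = (m \notin [:: 0; 97; 85; 127]%N)%:R}.
Proof.
move=> m mH; rewrite /lam1; set S := [:: _; _; _; _].
have -> : S = map bitvec [:: 0; 97; 85; 127]%N.
  by congr [:: _; _; _; _]; apply: supp_vec_bitvec; vm_compute.
rewrite mem_map_bitvec //; [by case: ifP | exact: (allP Hcodes_small)].
Qed.

Lemma lam2E : {in Hcodes, forall m, lam2 (bitvec m) = (m \notin [:: 0; 97; 42; 120]%N)%:R}.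
Proof.
move=> m mH; rewrite /lam2; set S := [:: _; _; _; _].
have -> : S = map bitvec [:: 0; 97; 42; 120]%N.
  by congr [:: _; _; _; _]; apply: supp_vec_bitvec; vm_compute.
rewrite mem_map_bitvec //; [by case: ifP | exact: (allP Hcodes_small)].
Qed.

Theorem lemma4 :
  ~ transitive_code (VHl lam1) /\ ~ transitive_code (VHl lam2).
Proof.
(* y comes from the codeword 7 = {1,2,3}; c from 30 = {2,3,4,5}, resp. 25 = {1,4,5}. *)
split.
  by apply: (@not_transitive_VHl_xor_count _ _ lam1E 30 7); vm_compute.
by apply: (@not_transitive_VHl_xor_count _ _ lam2E 25 7); vm_compute.
Qed.
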